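(* Let $n\in\mathbf{N}$ and $A\subset[n]$ have property P. Then for each $i\in\{1,3\}$, $$\left|A\cap\left(\tfrac n4,\tfrac n3\right]\cap(1+2\mathbf{Z})\right|+\left|A\cap\left(\tfrac{2n}{3},n\right]\cap(i+4\mathbf{Z})\right|\leqslant\frac{n}{12}+3.$$
   Context: A set $A\subset\mathbf{N}$ has property P if there are no $x,y,z\in A$ (not necessarily distinct $x,y$) with $z<x$, $z<y$ and $z\mid x+y$. Intervals denote sets of integers. *)

From mathcomp Require Import all_boot.

Definition propP (A : pred nat) : Prop :=
  forall x y z, A x -> A y -> A z -> z < x -> z < y -> ~~ (z %| x + y).

Definition subset_n (A : pred nat) (n : nat) : Prop :=
  forall x, A x -> 1 <= x <= n.

(** Let B be the odd elements of A in (n/4, n/3] and C the elements of A in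
    (2n/3, n] congruent to i mod 4.  Each b in B has a partner among 3b-2, 3b,
    3b+2 that is congruent to i mod 4 and lies outside C: if 3b is in A then b
    divides 3b + 3b, and if both 3b-2 and 3b+2 are in A then b divides their
    sum 6b.  Partners of distinct odd b are distinct, so B and C inject
    disjointly into the numbers congruent to i mod 4 in (3n/4 - 2, n + 2],
    of which there are at most n/12 + 3. *)

From mathcomp Require Import all_boot.
From mathcomp Require Import zify.

Lemma residue_window_size d r lo hi (s : seq nat) :
  uniq s -> {in s, forall v, v %% d = r /\ lo <= v %/ d <= hi} ->
  size s <= hi.+1 - lo.
Proof.
move=> s_uniq s_window.
have <- : size [seq q * d + r | q <- iota lo (hi.+1 - lo)] = hi.+1 - lo.
  by rewrite size_map size_iota.
apply: uniq_leq_size => // v /s_window [v_mod v_quo].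
apply/mapP; exists (v %/ d); last by rewrite -v_mod -divn_eq.
by rewrite mem_iota; lia.
Qed.

Lemma odd_eq_of_close3 b b' v :
  odd b -> odd b' -> 3 * b - 2 <= v <= 3 * b + 2 ->
  3 * b' - 2 <= v <= 3 * b' + 2 -> b = b'.
Proof. by move=> ob ob'; move: (modn2 b) (modn2 b'); rewrite ob ob'; lia. Qed.

Section Partner.
Variables (n i : nat) (A : pred nat).

Definition top_class x := [&& A x, 2 * n < 3 * x, x <= n & x %% 4 == i].

Definition partner b :=
  if 3 * b %% 4 == i then 3 * b
  else if top_class (3 * b - 2) then 3 * b + 2 else 3 * b - 2.

Lemma partner_close b : 3 * b - 2 <= partner b <= 3 * b + 2.
Proof. by rewrite /partner; case: ifP => _; [|case: ifP => _]; lia. Qed.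

Lemma partner_inj b b' : odd b -> odd b' -> partner b = partner b' -> b = b'.
Proof.
move=> ob ob' eq_p; have := partner_close b'; rewrite -eq_p.
exact: odd_eq_of_close3 ob ob' (partner_close b).
Qed.

Lemma partner_mod4 b :
  (i == 1) || (i == 3) -> odd b -> partner b %% 4 = i.
Proof.
move=> i13 ob; move: (modn2 b); rewrite ob /partner => b_odd.
by case: ifP => /eqP ?; [|case: ifP => _]; lia.
Qed.

Lemma partner_notin_top b : propP A -> A b -> ~~ top_class (partner b).
Proof.
move=> hP Ab; rewrite /partner.
case: ifP => _.
  apply/negP => /and4P [A3b lt3b _ _].
  have /negP := hP _ _ _ A3b A3b Ab ltac:(lia) ltac:(lia).
  by rewrite -mulnDl dvdn_mull.
case: ifP => [/and4P [Am ltm _ _] | /negbT //].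
apply/negP => /and4P [Ap _ lep _].
have /negP := hP _ _ _ Am Ap Ab ltac:(lia) ltac:(lia).
by rewrite (_ : _ + _ = 6 * b) ?dvdn_mull //; lia.
Qed.

End Partner.

Arguments partner_inj {n i A b b'}.
Arguments partner_notin_top n i {A b}.

Theorem mainTheorem13 (n : nat) (A : pred nat) :
  subset_n A n -> propP A ->
  forall i : nat, (i == 1) || (i == 3) ->
  12 * (#|[set x : 'I_(n.+1) | [&& A x, n < 4 * x, 3 * x <= n & odd x]]|
        + #|[set x : 'I_(n.+1) | [&& A x, 2 * n < 3 * x, x <= n & x %% 4 == i]]|)
  <= n + 36.
Proof.
move=> _ hP i i13.
set B := [set x : 'I_(n.+1) | _]; set C := [set x : 'I_(n.+1) | _].
pose s := [seq partner n i A b | b : 'I_n.+1 <- enum B]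
          ++ [seq nat_of_ord c | c <- enum C].
have size_s : size s = #|B| + #|C| by rewrite size_cat !size_map -!cardE.
have inB (b : 'I_n.+1) : b \in enum B -> [/\ A b, n < 4 * b, 3 * b <= n & odd b].
  by rewrite mem_enum inE => /and4P.
have inC (c : 'I_n.+1) : c \in enum C -> top_class n i A c by rewrite mem_enum inE.
have s_uniq : uniq s.
  rewrite cat_uniq !map_inj_in_uniq ?enum_uniq ?andbT.
  - apply/hasPn => _ /mapP [c /inC Cc ->]; apply/mapP => [[b /inB [Ab _ _ _] ebc]].
    by move: (partner_notin_top n i hP Ab); rewrite -ebc Cc.
  - by move=> x y _ _; apply: ord_inj.
  - move=> x y /inB [_ _ _ ox] /inB [_ _ _ oy] /(partner_inj ox oy).
    exact: ord_inj.
have s_window : {in s, forall v, v %% 4 = i /\ n %/ 6 <= v %/ 4 <= (n + 2) %/ 4}.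
  move=> v; rewrite mem_cat => /orP [] /mapP [x].
  - move=> /inB [_ l1 l2 ox] ->; have := partner_close n i A x.
    by rewrite partner_mod4 //; lia.
  - by move=> /inC /and4P [_ l1 l2 /eqP ?] ->; lia.
have := @residue_window_size 4 i _ _ s s_uniq s_window; rewrite size_s; lia.
Qed.
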